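(* Let $j\in\{2,3,4,5,6\}$, $\mathbf c\in\mathbf C^j_{\rm aut}$, $\mathbf m\in\mathbf M_{\mathbf c}$, $n>0$, $\bar s=(s_1,\dots,s_n)\in\mathbb Z^n$, $\bar b=(b_1,\dots,b_n)\in(L_{\mathbf c})^n$ and $\pi\in\operatorname{End}(N_{\mathbf c})$. Put $F^{\bar s,\bar b}_{\mathbf m}:=\sum_{i=1}^ns_i\,(F^{b_i}_{\mathbf m}\restriction\mathcal Z(H_{\mathbf m}))\in\operatorname{End}(\mathcal Z(H_{\mathbf m}))$ and $h'^*:=h^*_{\mathbf c}\circ\pi:N_{\mathbf c}\to H_{\mathbf c}$. Let $\mathcal A^{\bar s,\bar b}_{\mathbf m,\pi}$ be the set of all $g\in\operatorname{End}(H_{\mathbf m})$ with $g\restriction\mathcal Z(H_{\mathbf m})=F^{\bar s,\bar b}_{\mathbf m}$ and $g(x)\in h'^*(h_{\mathbf m}(x))\cdot\mathcal Z(H_{\mathbf m})$ for all $x\in H_{\mathbf m}$. Let $\mathcal F^{\bar s,\bar b}_{\mathbf m,\pi}$ be the set of all functions $f:N_{\mathbf c}\to\mathcal Z(H_{\mathbf m})$ such that for all $a,b\in N_{\mathbf c}$, $f(a)f(b)=F^{\bar s,\bar b}_{\mathbf m}(t')\cdot(t'')^{-1}\cdot f(ab)$, where $t',t''\in\mathcal Z(H_{\mathbf c})$ are the unique elements with $t'h^*_{\mathbf c}(ab)=h^*_{\mathbf c}(a)h^*_{\mathbf c}(b)$ and $t''h'^*(ab)=h'^*(a)h'^*(b)$.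 For $f\in\mathcal F^{\bar s,\bar b}_{\mathbf m,\pi}$ let $g^{\bar s,\bar b}_{\pi,f}:H_{\mathbf m}\to H_{\mathbf m}$ be $g^{\bar s,\bar b}_{\pi,f}(x)=F^{\bar s,\bar b}_{\mathbf m}(t)\cdot f(h_{\mathbf m}(x))\cdot h'^*(h_{\mathbf m}(x))$, where $t\in\mathcal Z(H_{\mathbf m})$ is the unique element with $x=t\,h^*_{\mathbf c}(h_{\mathbf m}(x))$. Then $\mathcal A^{\bar s,\bar b}_{\mathbf m,\pi}=\{g^{\bar s,\bar b}_{\pi,f}: f\in\mathcal F^{\bar s,\bar b}_{\mathbf m,\pi}\}$.
   Context: Groups are not assumed abelian; $\mathcal Z(H)$ is the center of $H$; the group operation in $\mathcal Z(H)$ is written multiplicatively in the formulas above, while sums of endomorphisms of $\mathcal Z(H)$ are pointwise (so $\sum_is_i\phi_i$ sends $z$ to $\prod_i\phi_i(z)^{s_i}$). $J_p$ is the additive group of $p$-adic integers. $\mathbf C^2_{\rm aut}$: tuples $\mathbf c=(L_{\mathbf c},N_{\mathbf c},H_{\mathbf c},h_{\mathbf c},h^*_{\mathbf c},F_{\mathbf c},(Q^{\bar s}_{\mathbf c}))$ with $L_{\mathbf c},H_{\mathbf c}$ groups, $F_{\mathbf c}:L_{\mathbf c}\to\operatorname{Aut}(H_{\mathbf c})$ an injective homomorphism ($F^\ell_{\mathbf c}:=F_{\mathbf c}(\ell)$), $N_{\mathbf c}\trianglelefteq L_{\mathbf c}$, $h_{\mathbf c}:H_{\mathbf c}\to N_{\mathbf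 c}$ an epimorphism with kernel $\mathcal Z(H_{\mathbf c})$ such that $F_{\mathbf c}(h_{\mathbf c}(a))$ is $x\mapsto axa^{-1}$ for all $a\in H_{\mathbf c}$, $h^*_{\mathbf c}:N_{\mathbf c}\to H_{\mathbf c}$ a map (not necessarily a homomorphism) with $h_{\mathbf c}\circ h^*_{\mathbf c}=\mathrm{id}$, and $(b_1,\dots,b_n)\in Q^{\bar s}_{\mathbf c}$ iff $\sum_is_iF^{b_i}_{\mathbf c}\restriction\mathcal Z(H_{\mathbf c})=0$. $\mathbf C^3_{\rm aut}$: add $H^*_{\mathbf c},\mathbb P_{\mathbf c}$ with $\mathcal Z(H_{\mathbf c})$ reduced; $H^*_{\mathbf c}\le H_{\mathbf c}$, $H_{\mathbf c}=\bigcup_{x\in\mathcal Z(H_{\mathbf c})}H^*_{\mathbf c}x$, $\mathcal Z(H^*_{\mathbf c})=\mathcal Z(H_{\mathbf c})\cap H^*_{\mathbf c}$; $\mathbb P_{\mathbf c}$ = set of primes $p$ such that $\mathcal Z(H_{\mathbf c})$ has a nonzero element of $p$-power order (then so does $\mathcal Z(H^*_{\mathbf c})$) or $J_p$ embeds in $\mathcal Z(H_{\mathbf c})$ (then $J_p$ embeds in $\mathcal Z(H^*_{\mathbf c})$). $\mathbf C^4_{\rm aut}$: $\mathbf c\in\mathbf C^3_{\rm aut}$ with $\mathcal Z(H_{\mathbf c})/\mathcal Z(H^*_{\mathbf c})$ torsion-free and $p$-divisible for all primes $p\notin\mathbb P_{\mathbf c}$. $\mathbf C^5_{\rm aut}$: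 pairs $(\mathbf c,\mathbf g)$, $\mathbf c\in\mathbf C^4_{\rm aut}$, $\mathbf g=(\mathbb G_{\mathbf g},(F^\ell_{\mathbf g})_{\ell\in L_{\mathbf c}})$, $\mathbb G_{\mathbf g}$ reduced torsion-free abelian with no $J_p$ embedded, $F^\ell_{\mathbf g}\in\operatorname{Aut}(\mathbb G_{\mathbf g})$, $(b_i)\in Q^{\bar s}_{\mathbf c}\Rightarrow\sum s_iF^{b_i}_{\mathbf g}=0$. $\mathbf C^6_{\rm aut}$: pairs $(\mathbf c,\mathcal G)$, $\mathbf c\in\mathbf C^4_{\rm aut}$, $\mathcal G$ a nonempty set of $\mathbf g$ with $(\mathbf c,\mathbf g)\in\mathbf C^5_{\rm aut}$, closed under restriction to $\mathrm{cl}\{x\}$ (smallest pure subgroup of $\mathbb G_{\mathbf g}$ containing $x$ closed under all $F^\ell_{\mathbf g}$), and containing up to isomorphism every such one-generated $\mathbf g$ embeddable compatibly into $(\mathcal Z(H_{\mathbf c}),(F^\ell_{\mathbf c})_\ell)$. For $j\in\{5,6\}$ the members are pairs and $L_{\mathbf c},H_{\mathbf c},\dots$ denote components of the underlying tuple. $\mathbf M_{\mathbf c}$: the class of $\mathbf m\in\mathbf C^j_{\rm aut}$ with $L_{\mathbf m}=L_{\mathbf c}$, $N_{\mathbf m}=N_{\mathbf c}$, $H_{\mathbf c}\subseteq H_{\mathbf m}$, $h_{\mathbf c}\subseteq h_{\mathbf m}$, $h^*_{\mathbf m}=h^*_{\mathbf c}$, $F^\ell_{\mathbf c}\subseteq F^\ell_{\mathbf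 m}$ for all $\ell$, $Q^{\bar s}_{\mathbf m}=Q^{\bar s}_{\mathbf c}$, $H_{\mathbf m}$ generated by $\mathcal Z(H_{\mathbf m})\cup H_{\mathbf c}$, $\mathcal Z(H_{\mathbf c})=\mathcal Z(H_{\mathbf m})\cap H_{\mathbf c}$; if $j\ge3$ also $\mathbb P_{\mathbf m}=\mathbb P_{\mathbf c}$, $H^*_{\mathbf m}=H^*_{\mathbf c}$; if $j=5$ the same $\mathbf g$; if $j=6$ the same $\mathcal G$. *)

(* abstract (possibly infinite) groups are mathcomp's
   [groupType] (boot/monoid.v); subsets are Prop-valued predicates. *)
From HB Require Import structures.
From mathcomp Require Import all_boot all_order all_algebra.
Set Implicit Arguments.
Unset Strict Implicit.
Unset Printing Implicit Defensive.

Local Open Scope group_scope.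

Definition zexpg (G : groupType) (x : G) (s : int) : G :=
  match s with Posz n => x ^+ n | Negz n => (x ^+ n.+1)^-1 end.

Section GroupNotions.
Variable G : groupType.

Definition is_subgroup (S : G -> Prop) : Prop :=
  [/\ S 1, (forall x y, S x -> S y -> S (x * y)) & (forall x, S x -> S x^-1)].

Definition is_normal (N : G -> Prop) : Prop :=
  is_subgroup N /\ (forall x l : G, N x -> N (l^-1 * x * l)).

Definition center (H : G -> Prop) (z : G) : Prop :=
  H z /\ (forall x, H x -> z * x = x * z).

Definition generated (A : G -> Prop) (x : G) : Prop :=
  forall S : G -> Prop, is_subgroup S -> (forall y, A y -> S y) -> S x.

Definition hom_on (G' : groupType) (S : G -> Prop) (f : G -> G') : Prop :=
  forall x y, S x -> S y -> f (x * y) = f x * f y.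

Definition endo_on (H : G -> Prop) (f : G -> G) : Prop :=
  (forall x, H x -> H (f x)) /\ hom_on H f.

Definition aut_on (H : G -> Prop) (f : G -> G) : Prop :=
  [/\ endo_on H f,
      (forall x y, H x -> H y -> f x = f y -> x = y)
    & (forall y, H y -> exists2 x, H x & f x = y)].

End GroupNotions.

(* The group L_c is the whole group LT,
   H_c is a subgroup (predicate) of the ambient group T, N_c is a predicate
   on LT.  Maps are total functions; only their values on the relevant
   domains matter.  The component Q^{s}_c is determined by the other data
   (see [Qrel]) and is therefore not stored. *)
Record C2data (LT T : groupType) := {
  cN : LT -> Prop;
  cH : T -> Prop;
  cF : LT -> T -> T;
  ch : T -> LT;
  chs : LT -> T
}.

Section C2.
Variables LT T : groupType.
Implicit Types c m : C2data LT T.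

Definition Fsum c (n : nat) (s : 'I_n -> int) (b : 'I_n -> LT) (z : T) : T :=
  \prod_(i < n) zexpg (cF c (b i) z) (s i).

Definition Qrel c (n : nat) (s : 'I_n -> int) (b : 'I_n -> LT) : Prop :=
  forall z, center (cH c) z -> Fsum c s b z = 1.

Definition isC2 c : Prop :=
  [/\ is_normal (cN c), is_subgroup (cH c),
      [/\ forall l, aut_on (cH c) (cF c l),
          forall l1 l2 x, cH c x -> cF c (l1 * l2) x = cF c l1 (cF c l2 x)
        & forall l1 l2, (forall x, cH c x -> cF c l1 x = cF c l2 x) -> l1 = l2],
      [/\ forall a, cH c a -> cN c (ch c a),
          hom_on (cH c) (ch c),
          forall l, cN c l -> exists2 a, cH c a & ch c a = l
        & forall a, cH c a -> (ch c a = 1 <-> center (cH c) a)]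
    &
      (forall a x, cH c a -> cH c x -> cF c (ch c a) x = a * x * a^-1) /\
      (forall l, cN c l -> cH c (chs c l) /\ ch c (chs c l) = l)].

(* m \in M_c (case j = 2) *)
Definition inM c m : Prop :=
  isC2 m /\
  [/\ (forall l, cN m l <-> cN c l),
      (forall x, cH c x -> cH m x),
      (forall a, cH c a -> ch m a = ch c a),
      (forall l, cN c l -> chs m l = chs c l)
    & (forall l x, cH c x -> cF m l x = cF c l x)] /\
  [/\
      (forall n (s : 'I_n -> int) (b : 'I_n -> LT), Qrel m s b <-> Qrel c s b),
      (forall x, cH m x <-> generated (fun y => center (cH m) y \/ cH c y) x)
    & (forall z, center (cH c) z <-> center (cH m) z /\ cH c z)].

Section Prop35.
Variables (c m : C2data LT T) (n : nat) (s : 'I_n -> int) (b : 'I_n -> LT)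
  (pi : LT -> LT).

Definition hs' (l : LT) : T := chs c (pi l).

(* t' with t' h^*_c(ab) = h^*_c(a) h^*_c(b) *)
Definition tprime (a a' : LT) : T := chs c a * chs c a' * (chs c (a * a'))^-1.
(* t'' with t'' h'^*(ab) = h'^*(a) h'^*(b) *)
Definition tsecond (a a' : LT) : T := hs' a * hs' a' * (hs' (a * a'))^-1.

Definition inA (g : T -> T) : Prop :=
  [/\ endo_on (cH m) g,
      (forall z, center (cH m) z -> g z = Fsum m s b z)
    & (forall x, cH m x ->
         exists2 z, center (cH m) z & g x = hs' (ch m x) * z)].

Definition inFset (f : LT -> T) : Prop :=
  (forall a, cN c a -> center (cH m) (f a)) /\
  (forall a a', cN c a -> cN c a' ->
     f a * f a' = Fsum m s b (tprime a a') * (tsecond a a')^-1 * f (a * a')).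

(* g^{s,b}_{pi,f}; t = x (h^*_c(h_m(x)))^{-1} is the unique element with
   x = t h^*_c(h_m(x)) *)
Definition gpf (f : LT -> T) (x : T) : T :=
  Fsum m s b (x * (chs c (ch m x))^-1) * f (ch m x) * hs' (ch m x).

End Prop35.
End C2.

From mathcomp Require Import all_boot all_order all_algebra.
Set Implicit Arguments.
Unset Strict Implicit.
Unset Printing Implicit Defensive.

(* Since h_m is a homomorphism with kernel Z(H_m) and h_m o h^*_c = id on N_c,
   every x in H_m factors as t * h^*_c(h_m x) with t central, and
   h^*_c(a) h^*_c(a') = t'(a,a') h^*_c(aa').  An endomorphism g in A is thus
   determined by its restriction F = F^{s,b}_m to the centre together with
   u(a) = g(h^*_c a), and it is multiplicative iff u(a) u(a') = F(t'(a,a')) u(aa').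
   The coset condition says u(a) = f(a) h'^*(a) with f central-valued, and
   rewritten in terms of f the identity for u is exactly the one defining the
   set of cocycles f.  Only the facts that F is an endomorphism of Z(H_m) and
   that h'^* maps N_c into H_m are used; neither n > 0 nor the multiplicativity
   of pi plays a role. *)

Local Open Scope group_scope.

Section SubgroupFacts.
Variable G : groupType.
Implicit Types (S H : G -> Prop) (x y z : G).

Lemma hom_on1 (G' : groupType) S (f : G -> G') :
  is_subgroup S -> hom_on S f -> f 1 = 1.
Proof.
case=> S1 _ _ f_hom; apply: (@mulgI _ (f 1)).
by rewrite -f_hom // !mulg1.
Qed.

Lemma hom_onV (G' : groupType) S (f : G -> G') x :
  is_subgroup S -> hom_on S f -> S x -> f x^-1 = (f x)^-1.
Proof.
move=> S_sub f_hom Sx; have [_ _ SV] := S_sub.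
apply: (@mulIg _ (f x)); rewrite mulVg -f_hom ?mulVg; [|exact: SV|by []].
exact: hom_on1 S_sub f_hom.
Qed.

Lemma endo_on_eq S (f g : G -> G) : is_subgroup S ->
  (forall x, S x -> f x = g x) -> endo_on S g -> endo_on S f.
Proof.
case=> _ SM _ fg [g_mem g_hom].
split=> [x Sx | x y Sx Sy]; first by rewrite fg //; apply: g_mem.
by rewrite !fg //; [apply: g_hom | apply: SM].
Qed.

Lemma zexpg_mem S x k : is_subgroup S -> S x -> S (zexpg x k).
Proof.
case=> S1 SM SV Sx; have SX n : S (x ^+ n).
  by elim: n => [|n IHn] //; rewrite expgS; apply: SM.
by case: k => n /=; [|apply: SV].
Qed.

Lemma zexpgMn x y k : commute x y -> zexpg (x * y) k = zexpg x k * zexpg y k.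
Proof.
case: k => n cxy /=; rewrite expgMn //.
by rewrite (commuteX2 _ _ cxy) invgM.
Qed.

Lemma center_commute H z y : center H z -> H y -> commute z y.
Proof. by case=> _; apply. Qed.

Lemma center_subgroup H : is_subgroup H -> is_subgroup (center H).
Proof.
case=> H1 HM HV; split.
- by split=> // y _; rewrite mulg1 mul1g.
- move=> z z' [Hz cz] [Hz' cz']; split=> [|y Hy]; first exact: HM.
  by rewrite -mulgA (cz' y Hy) mulgA (cz y Hy) mulgA.
- move=> z [Hz cz]; split=> [|y Hy]; first exact: HV.
  by apply: (@mulgI _ z); rewrite mulVKg mulgA (cz y Hy) mulgK.
Qed.

Lemma aut_on_endo_center H f : aut_on H f -> endo_on (center H) f.
Proof.
case=> [[f_mem f_hom] _ f_onto].
split=> [z [Hz cz] | z z' [Hz _] [Hz' _]]; last exact: f_hom.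
split=> [|_ /f_onto [y Hy <-]]; first exact: f_mem.
by rewrite -!f_hom // cz.
Qed.

Lemma endo_center_prod_zexpg H n (F : 'I_n -> G -> G) (k : 'I_n -> int) :
  is_subgroup H -> (forall i, endo_on (center H) (F i)) ->
  endo_on (center H) (fun z => \prod_(i < n) zexpg (F i z) (k i)).
Proof.
move=> H_sub F_endo; have Z_sub := center_subgroup H_sub.
have [Z1 ZM _] := Z_sub.
have FkZ i z : center H z -> center H (zexpg (F i z) (k i)).
  by move=> Zz; apply: zexpg_mem => //; apply: (proj1 (F_endo i)).
split=> [z Zz | z z' Zz Zz'].
  by apply: (big_ind (center H)) => // i _; apply: FkZ.
rewrite -prodgM_commute => [|i j _ _]; last first.
  by apply: center_commute (FkZ i z Zz) (proj1 (FkZ j z' Zz')).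
apply: eq_bigr => i _; rewrite (proj2 (F_endo i)) // zexpgMn //.
exact: center_commute (proj1 (F_endo i) z Zz) (proj1 (proj1 (F_endo i) z' Zz')).
Qed.

End SubgroupFacts.

Definition cocycle (LT T : groupType) (sec : LT -> T) (a a' : LT) : T :=
  sec a * sec a' * (sec (a * a'))^-1.

Lemma cocycleK (LT T : groupType) (sec : LT -> T) a a' :
  cocycle sec a a' * sec (a * a') = sec a * sec a'.
Proof. exact: mulgVK. Qed.

Record central_extension (LT T : groupType) (N : LT -> Prop) (H : T -> Prop)
    (p : T -> LT) (sec : LT -> T) : Prop := CentralExtension {
  base_subgroup : is_subgroup N;
  ext_subgroup : is_subgroup H;
  proj_hom : hom_on H p;
  proj_mem : forall x, H x -> N (p x);
  proj_eq1 : forall x, H x -> p x = 1 <-> center H x;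
  sec_mem : forall a, N a -> H (sec a);
  proj_sec : forall a, N a -> p (sec a) = a
}.

Section CentralExtension.
Variables (LT T : groupType) (N : LT -> Prop) (H : T -> Prop) (p : T -> LT).
Variables (sec sec' : LT -> T) (phi : T -> T).
Hypotheses (ext : central_extension N H p sec)
  (sec'_mem : forall a, N a -> H (sec' a)) (phi_endo : endo_on (center H) phi).

Local Notation Z := (center H).

Definition central_part (x : T) : T := x * (sec (p x))^-1.

Definition compatible_endo (g : T -> T) : Prop :=
  [/\ endo_on H g, (forall z, Z z -> g z = phi z)
    & (forall x, H x -> exists2 z, Z z & g x = sec' (p x) * z)].

Definition twisted_cocycle (f : LT -> T) : Prop :=
  (forall a, N a -> Z (f a)) /\
  (forall a a', N a -> N a' ->
     f a * f a' = phi (cocycle sec a a') * (cocycle sec' a a')^-1 * f (a * a')).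

Definition induced_map (f : LT -> T) (x : T) : T :=
  phi (central_part x) * f (p x) * sec' (p x).

Definition twisted_hom (u : LT -> T) : Prop :=
  forall a a', N a -> N a' -> u a * u a' = phi (cocycle sec a a') * u (a * a').

Let H_sub := ext_subgroup ext.
Let Z_sub := center_subgroup H_sub.
Let N_mul a a' : N a -> N a' -> N (a * a').
Proof. by have [_ NM _] := base_subgroup ext; apply: NM. Qed.
Let H_mul x y : H x -> H y -> H (x * y).
Proof. by have [_ HM _] := H_sub; apply: HM. Qed.
Let H_inv x : H x -> H x^-1.
Proof. by have [_ _ HV] := H_sub; apply: HV. Qed.
Let p_inv x : H x -> p x^-1 = (p x)^-1.
Proof. exact: hom_onV H_sub (proj_hom ext). Qed.
Let Z_mul z z' : Z z -> Z z' -> Z (z * z').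
Proof. by have [_ ZM _] := Z_sub; apply: ZM. Qed.
Let phiZ z : Z z -> Z (phi z). Proof. exact: (proj1 phi_endo). Qed.

Lemma central_partK x : central_part x * sec (p x) = x.
Proof. exact: mulgVK. Qed.

Lemma central_part_center x : H x -> Z (central_part x).
Proof.
move=> Hx; have Npx := proj_mem ext Hx; have Hs := sec_mem ext Npx.
apply/(proj_eq1 ext); first exact: H_mul Hx (H_inv Hs).
by rewrite /central_part (proj_hom ext Hx (H_inv Hs)) (p_inv Hs) (proj_sec ext Npx) mulgV.
Qed.

Lemma cocycle_sec_center a a' : N a -> N a' -> Z (cocycle sec a a').
Proof.
move=> Na Na'; have Naa := N_mul Na Na'.
have Hs := sec_mem ext Na; have Hs' := sec_mem ext Na'; have Hss := sec_mem ext Naa.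
apply/(proj_eq1 ext); first exact: H_mul (H_mul Hs Hs') (H_inv Hss).
rewrite /cocycle (proj_hom ext (H_mul Hs Hs') (H_inv Hss)) (proj_hom ext Hs Hs').
by rewrite (p_inv Hss) !(proj_sec ext) // mulgV.
Qed.

Lemma central_partM x y : H x -> H y ->
  central_part (x * y) = central_part x * central_part y * cocycle sec (p x) (p y).
Proof.
move=> Hx Hy; have Ns := sec_mem ext (proj_mem ext Hx).
apply: (@mulIg _ (sec (p (x * y)))).
rewrite central_partK (proj_hom ext Hx Hy) -mulgA cocycleK mulgA.
rewrite -(mulgA _ _ (sec (p x))) (center_commute (central_part_center Hy) Ns).
by rewrite mulgA central_partK -mulgA central_partK.
Qed.

Lemma compatible_endo_twisted_hom g :
  compatible_endo g -> twisted_hom (fun a => g (sec a)).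
Proof.
case=> [[_ g_hom] g_phi _] a a' Na Na'.
have Zc := cocycle_sec_center Na Na'.
rewrite -(g_hom _ _ (sec_mem ext Na) (sec_mem ext Na')) -(cocycleK sec a a').
by rewrite (g_hom _ _ (proj1 Zc) (sec_mem ext (N_mul Na Na'))) (g_phi _ Zc).
Qed.

Lemma compatible_endoE g x : compatible_endo g -> H x ->
  g x = phi (central_part x) * g (sec (p x)).
Proof.
case=> [[_ g_hom] g_phi _] Hx; have Zt := central_part_center Hx.
rewrite -{1}(central_partK x).
by rewrite (g_hom _ _ (proj1 Zt) (sec_mem ext (proj_mem ext Hx))) (g_phi _ Zt).
Qed.

Lemma compatible_endo_coset g a : compatible_endo g -> N a ->
  Z (g (sec a) * (sec' a)^-1).
Proof.
case=> _ _ g_coset Na; have [z Zz ->] := g_coset _ (sec_mem ext Na).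
by rewrite (proj_sec ext Na) -(center_commute Zz (sec'_mem Na)) mulgK.
Qed.

Lemma compatible_endo_eq_on g g' : (forall x, H x -> g x = g' x) ->
  compatible_endo g' -> compatible_endo g.
Proof.
move=> gE [g'_endo g'_phi g'_coset]; split.
- exact: endo_on_eq H_sub gE g'_endo.
- by move=> z Zz; rewrite gE ?g'_phi //; case: Zz.
- by move=> x Hx; rewrite gE //; apply: g'_coset.
Qed.

Lemma twisted_hom1 u : twisted_hom u -> u 1 = phi (sec 1).
Proof.
move=> u_tw; have [N1 _ _] := base_subgroup ext.
apply: (@mulIg _ (u 1)); have := u_tw _ _ N1 N1.
by rewrite /cocycle !mulg1 mulgK.
Qed.

Lemma twisted_hom_endo u : twisted_hom u -> (forall a, N a -> H (u a)) ->
  endo_on H (fun x => phi (central_part x) * u (p x)).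
Proof.
move=> u_tw u_mem; have [_ phi_hom] := phi_endo.
split=> [x Hx | x y Hx Hy].
  exact: H_mul (proj1 (phiZ (central_part_center Hx))) (u_mem _ (proj_mem ext Hx)).
have Na := proj_mem ext Hx; have Na' := proj_mem ext Hy.
have Zx := central_part_center Hx; have Zy := central_part_center Hy.
have Zc := cocycle_sec_center Na Na'.
rewrite central_partM // (proj_hom ext Hx Hy).
rewrite (phi_hom _ _ (Z_mul Zx Zy) Zc) (phi_hom _ _ Zx Zy) -mulgA -u_tw //.
rewrite !mulgA -(mulgA (phi (central_part x)) (phi (central_part y))).
by rewrite (center_commute (phiZ Zy) (u_mem _ Na)) mulgA.
Qed.

Lemma twisted_hom_center u z : twisted_hom u -> Z z ->
  phi (central_part z) * u (p z) = phi z.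
Proof.
move=> u_tw Zz; have [Hz _] := Zz; have [N1 _ _] := base_subgroup ext.
have pz1 : p z = 1 by apply/(proj_eq1 ext).
have Zs1 : Z (sec 1).
  by apply/(proj_eq1 ext); [exact: (sec_mem ext N1) | exact: (proj_sec ext N1)].
rewrite pz1 (twisted_hom1 u_tw) -(proj2 phi_endo _ _ (central_part_center Hz) Zs1).
by rewrite /central_part pz1 mulgVK.
Qed.

Lemma twisted_cocycle_hom_iff f a a' : N a -> N a' -> Z (f a') -> Z (f (a * a')) ->
  f a * f a' = phi (cocycle sec a a') * (cocycle sec' a a')^-1 * f (a * a') <->
  f a * sec' a * (f a' * sec' a') = phi (cocycle sec a a') * (f (a * a') * sec' (a * a')).
Proof.
move=> Na Na' Zfa' Zfaa.
have Hc : H (cocycle sec' a a').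
  exact: H_mul (H_mul (sec'_mem Na) (sec'_mem Na')) (H_inv (sec'_mem (N_mul Na Na'))).
have cf := center_commute Zfaa Hc.
have -> : f a * sec' a * (f a' * sec' a') = f a * f a' * cocycle sec' a a' * sec' (a * a').
  rewrite -(mulgA _ (cocycle sec' a a')) cocycleK !mulgA -(mulgA (f a) (sec' a)).
  by rewrite -(center_commute Zfa' (sec'_mem Na)) !mulgA.
rewrite (mulgA (phi _)); split=> [-> | /(mulIg (sec' (a * a'))) E].
  by rewrite -(mulgA _ (f (a * a')) (cocycle sec' a a')) cf mulgA mulgVK.
by rewrite -(mulgK (cocycle sec' a a') (f a * f a')) E -mulgA (commuteV cf) mulgA.
Qed.

Lemma induced_map_compatible f : twisted_cocycle f -> compatible_endo (induced_map f).
Proof.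
case=> fZ f_coc; pose u a := f a * sec' a.
have u_tw : twisted_hom u.
  move=> a a' Na Na'.
  by apply/(twisted_cocycle_hom_iff Na Na' (fZ _ Na') (fZ _ (N_mul Na Na'))); apply: f_coc.
have u_mem a : N a -> H (u a) by move=> Na; exact: H_mul (proj1 (fZ a Na)) (sec'_mem Na).
have uE x : induced_map f x = phi (central_part x) * u (p x) by rewrite mulgA.
split.
- exact: endo_on_eq H_sub (fun x _ => uE x) (twisted_hom_endo u_tw u_mem).
- by move=> z Zz; rewrite uE twisted_hom_center.
- move=> x Hx; have Npx := proj_mem ext Hx.
  have Zt := Z_mul (phiZ (central_part_center Hx)) (fZ _ Npx).
  by exists (phi (central_part x) * f (p x)); last exact: (center_commute Zt (sec'_mem Npx)).
Qed.

Theorem compatible_endoP g : compatible_endo g <->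
  exists2 f, twisted_cocycle f & forall x, H x -> g x = induced_map f x.
Proof.
split=> [g_comp | [f f_coc gE]]; last first.
  exact: compatible_endo_eq_on gE (induced_map_compatible f_coc).
pose f a := g (sec a) * (sec' a)^-1.
have fZ a : N a -> Z (f a) by apply: compatible_endo_coset.
have fE a : f a * sec' a = g (sec a) by apply: mulgVK.
exists f.
  split=> // a a' Na Na'.
  apply/(twisted_cocycle_hom_iff Na Na' (fZ _ Na') (fZ _ (N_mul Na Na'))).
  by rewrite !fE; apply: compatible_endo_twisted_hom.
by move=> x Hx; rewrite (compatible_endoE g_comp Hx) /induced_map -mulgA fE.
Qed.

End CentralExtension.

Lemma Fsum_endo_center (LT T : groupType) (m : C2data LT T) n (s : 'I_n -> int)
    (b : 'I_n -> LT) :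
  isC2 m -> endo_on (center (cH m)) (Fsum m s b).
Proof.
case=> _ H_sub [F_aut _ _] _ _.
by apply: endo_center_prod_zexpg H_sub _ => i; apply: aut_on_endo_center.
Qed.

Lemma inM_central_extension (LT T : groupType) (c m : C2data LT T) :
  isC2 c -> inM c m -> central_extension (cN c) (cH m) (ch m) (chs c).
Proof.
case=> [[N_sub _] _ _ _ [_ c_sec]].
case=> [[_ H_sub _ [h_mem h_hom _ h_ker] _] [[N_eq Hc_sub h_eq _ _] _]].
split=> // [x Hx | a /c_sec [/Hc_sub] | a /c_sec [Hca e]] //.
- exact/N_eq/h_mem.
- by rewrite h_eq.
Qed.

Theorem proposition3p5 (LT T : groupType) (c m : C2data LT T)
  (n : nat) (s : 'I_n -> int) (b : 'I_n -> LT) (pi : LT -> LT) :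
  isC2 c -> inM c m -> (0 < n)%N ->
  endo_on (cN c) pi ->
  forall g : T -> T,
    inA c m s b pi g <->
    exists2 f : LT -> T, inFset c m s b pi f &
      forall x, cH m x -> g x = gpf c m s b pi f x.
Proof.
move=> hc hm _ [pi_mem _] g.
have ext := inM_central_extension hc hm.
have hs'_mem a : cN c a -> cH m (hs' c pi a) by move/pi_mem/(sec_mem ext).
exact: (compatible_endoP ext hs'_mem (Fsum_endo_center s b (proj1 hm)) g).
Qed.
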